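(* Let $\sigma\le\tau$ be stopping times with values in $\{0,\ldots,n\}$, and let $Y^{up},Y^{low}$ be adapted integrable real-valued processes such that for every $i$ with $\sigma\le i<\tau$, $$Y^{up}_i\ge\max\{S_i,\;E_i[Y^{up}_{i+1}]+f(i,Y^{up}_i,E_i[\beta_{i+1}Y^{up}_{i+1}])\Delta_i\},$$ $$Y^{low}_i\le\max\{S_i,\;E_i[Y^{low}_{i+1}]+f(i,Y^{low}_i,E_i[\beta_{i+1}Y^{low}_{i+1}])\Delta_i\},$$ and $Y^{up}_\tau\ge Y^{low}_\tau$. Then $Y^{low}_i\le Y^{up}_i$ almost surely on $\{\sigma\le i\le\tau\}$ for every $i=0,\ldots,n$.
   Context: Standing setting: $n\ge 1$ and $D\ge 1$ are integers; $(\Omega,\mathcal F,(\mathcal F_i)_{i=0,\ldots,n},P)$ is a filtered probability space and $E_i[\cdot]=E[\cdot\mid\mathcal F_i]$. The constants $\Delta_0,\ldots,\Delta_{n-1}$ are positive reals. $S=(S_i)_{i=0,\ldots,n}$ is an adapted process with values in $\mathbb R\cup\{-\infty\}$, $S_n$ real-valued, with $\sum_{i=0}^{n-1}E[|S_i\mathbf 1_{\{S_i>-\infty\}}|]+E[|S_n|]<\infty$. The random field $f:\Omega\times\{0,\ldots,n-1\}\times\mathbb R\times\mathbb R^D\to\mathbb R$ is measurable, $f(\cdot,i,y,z)$ is $\mathcal F_i$-measurable for every $(y,z)$ (the dependence on $\omega$ is suppressed), $\sum_{i=0}^{n-1}E[|f(i,0,0)|]<\infty$, and there are adapted nonnegative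 processes $\alpha^{(0)},\ldots,\alpha^{(D)}$ with $|f(i,y,z)-f(i,y',z')|\le\alpha^{(0)}_i|y-y'|+\sum_{d=1}^D\alpha^{(d)}_i|z_d-z'_d|$ for all $(y,z),(y',z')\in\mathbb R\times\mathbb R^D$. $\beta=(\beta_i)_{i=1,\ldots,n}$ is a bounded adapted $\mathbb R^D$-valued process, and for $i=0,\ldots,n-1$ almost surely $\alpha^{(0)}_i<1/\Delta_i$ and $\sum_{d=1}^D\alpha^{(d)}_i|\beta_{d,i+1}|\le 1/\Delta_i$. *)

From HB Require Import structures.
From mathcomp Require Import all_boot all_order all_algebra.
From mathcomp Require Import all_classical all_reals all_analysis.
From mathcomp Require Import measurable_realfun.
Set Implicit Arguments. Unset Strict Implicit. Unset Printing Implicit Defensive.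
Import Order.TTheory GRing.Theory Num.Theory.
Local Open Scope classical_set_scope.
Local Open Scope ring_scope.

Definition measurable_wrt {d} {T : measurableType d} {d'} {U : measurableType d'}
  (G : set (set T)) (X : T -> U) : Prop :=
  forall B : set U, measurable B -> G (X @^-1` B).

Definition filtration {d} {T : measurableType d} (n : nat)
  (F : nat -> set (set T)) : Prop :=
  (forall i, (i <= n)%N -> sigma_algebra setT (F i) /\ F i `<=` measurable) /\
  (forall i j, (i <= j <= n)%N -> F i `<=` F j).

Definition stopping_time {d} {T : measurableType d} (n : nat)
  (F : nat -> set (set T)) (tau : T -> nat) : Prop :=
  (forall x, (tau x <= n)%N) /\ (forall i, (i <= n)%N -> F i [set x | (tau x <= i)%N]).

Definition is_condexp {d} {T : measurableType d} {R : realType}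
  (mu : probability T R) (G : set (set T)) (X Y : T -> R) : Prop :=
  measurable_wrt G Y /\ mu.-integrable setT (EFin \o Y) /\
  (forall A, G A -> (\int[mu]_(x in A) (Y x)%:E = \int[mu]_(x in A) (X x)%:E)%E).

Definition emeasurable_wrt {d} {T : measurableType d} {R : realType}
  (G : set (set T)) (X : T -> \bar R) : Prop :=
  forall B : set (\bar R), measurable B -> G (X @^-1` B).

From HB Require Import structures.
From mathcomp Require Import all_boot all_order all_algebra.
From mathcomp Require Import all_classical all_reals all_analysis.
From mathcomp Require Import measurable_realfun.
From mathcomp Require Import ring lra.
Import Order.TTheory GRing.Theory Num.Theory.
Local Open Scope classical_set_scope.
Local Open Scope ring_scope.
Set Implicit Arguments. Unset Strict Implicit. Unset Printing Implicit Defensive.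

(* Backward induction on i.  Put A := {sigma <= i < tau}, an F_i-set, and
   dY := Ylow_{i+1} - Yup_{i+1} <= 0 on A.  At a point of A where
   Ylow_i > Yup_i >= S_i, both recursions are active, and the Lipschitz bound
   on f gives
     (1 - Delta alpha0) (Ylow_i - Yup_i)
        <= E_i[dY] + Delta sum_k alpha_k |E_i[beta_k dY]|.
   The right-hand side is <= 0 a.s. on A: on an F_i-measurable cell where
   Delta alpha_k and the sign of E_i[beta_k dY] are frozen up to eps, it equals
   E_i[dY (1 + sum_k lambda_k beta_k)] with 1 + sum_k lambda_k beta_k >= -O(eps)
   by the hypothesis sum_k alpha_k |beta_k| <= 1/Delta, so it is at most
   O(eps) E_i[|dY|].  The cells are needed because E_i is only known through
   its defining integral identity, so F_i-measurable factors cannot be pulled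
   out of it; there are countably many cells, so the bound holds a.s. for every
   eps.  Since Delta alpha0 < 1, this contradicts Ylow_i > Yup_i. *)

Section measurable_wrt.
Context d (T : measurableType d) (R : realType) (G : set (set T)).
Hypothesis sG : sigma_algebra setT G.

Lemma sigma_setE (A : set T) : G A <-> measurable (A : set (g_sigma_algebraType G)).
Proof. by rewrite measurable_g_measurableTypeE. Qed.

Lemma measurable_wrt_fun (X : T -> R) :
  measurable_wrt G X -> measurable_fun [set: g_sigma_algebraType G] X.
Proof. by move=> mX _ B mB; rewrite setTI; apply/sigma_setE; exact: mX. Qed.

Lemma measurable_wrt_measurable (X : T -> R) : G `<=` measurable ->
  measurable_wrt G X -> measurable_fun [set: T] X.
Proof. by move=> subG mX _ B mB; rewrite setTI; apply: subG; exact: mX. Qed.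

Lemma sigma_set_ler (f g : g_sigma_algebraType G -> R) :
  measurable_fun setT f -> measurable_fun setT g -> G [set x | f x <= g x].
Proof.
move=> mf mg; apply/sigma_setE.
by have := measurable_fun_ler mf mg measurableT (Y := [set true]); rewrite setTI; apply.
Qed.

Lemma sigma_set_ltr (f g : g_sigma_algebraType G -> R) :
  measurable_fun setT f -> measurable_fun setT g -> G [set x | f x < g x].
Proof.
move=> mf mg; apply/sigma_setE.
by have := measurable_fun_ltr mf mg measurableT (Y := [set true]); rewrite setTI; apply.
Qed.

End measurable_wrt.

Lemma stopping_window_sigma d (T : measurableType d) (n i : nat)
    (F : nat -> set (set T)) (sigma tau : T -> nat) :
  sigma_algebra setT (F i) -> (i <= n)%N ->
  stopping_time n F sigma -> stopping_time n F tau ->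
  F i [set x | (sigma x <= i < tau x)%N].
Proof.
move=> sF lein [_ sigma_st] [_ tau_st]; apply/(sigma_setE sF).
have -> : [set x | (sigma x <= i < tau x)%N] =
    [set x | (sigma x <= i)%N] `&` ~` [set x | (tau x <= i)%N].
  apply/seteqP; split => x /=.
    by move=> /andP[si it]; split => //; apply/negP; rewrite -ltnNge.
  by move=> [si /negP]; rewrite -ltnNge => it; apply/andP.
apply: measurableI; first exact/(sigma_setE sF)/sigma_st.
by apply: measurableC; exact/(sigma_setE sF)/tau_st.
Qed.

Section integral_facts.
Context d (T : measurableType d) (R : realType) (mu : {measure set T -> \bar R}).

Lemma ae_notin_of_gt0_integral_le0 (E : set T) (u : T -> R) :
  measurable E -> measurable_fun E u -> (forall x, E x -> 0 < u x) ->
  (\int[mu]_(x in E) (u x)%:E <= 0)%E -> {ae mu, forall x, ~ E x}.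
Proof.
move=> mE mu_ u_gt0 int_le0.
have int_abs0 : (\int[mu]_(x in E) `|(EFin \o u) x| = 0)%E.
  rewrite (eq_integral (fun x => (u x)%:E)); last first.
    by move=> x /set_mem Ex; rewrite /= ger0_norm // ltW // u_gt0.
  apply/eqP; rewrite eq_le int_le0 integral_ge0 // => x Ex.
  by rewrite lee_fin ltW // u_gt0.
have [/(_ int_abs0) u0 _] :=
  ae_eq_integral_abs mu mE (proj2 (measurable_EFinP _ _) mu_).
apply: filterS u0 => x /= u0 Ex.
by have [ux0] := u0 Ex; have := u_gt0 _ Ex; rewrite ux0 ltxx.
Qed.

Lemma ae_le_integral (E : set T) (f g : T -> R) : measurable E ->
  mu.-integrable E (EFin \o f) -> mu.-integrable E (EFin \o g) ->
  {ae mu, forall x, E x -> f x <= g x} ->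
  (\int[mu]_(x in E) (f x)%:E <= \int[mu]_(x in E) (g x)%:E)%E.
Proof.
move=> mE iF iG [N [mN N0 sN]].
rewrite (negligible_integral mN mE iF N0) (negligible_integral mN mE iG N0).
have mEN : measurable (E `\` N) by exact: measurableD.
apply: le_integral => //; [exact: integrableS iF | exact: integrableS iG |].
move=> x /set_mem [Ex Nx]; rewrite lee_fin.
by apply: contrapT => fg; apply: Nx; apply: sN => /(_ Ex); exact: fg.
Qed.

Definition same_integral (E : set T) (f g : T -> R) :=
  [/\ mu.-integrable E (EFin \o f), mu.-integrable E (EFin \o g) &
      (\int[mu]_(x in E) (f x)%:E = \int[mu]_(x in E) (g x)%:E)%E].

Lemma same_integral_ext E f g f' g' : f =1 f' -> g =1 g' ->
  same_integral E f g -> same_integral E f' g'.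
Proof. by move=> /funext <- /funext <-. Qed.

Lemma same_integral0 E : same_integral E (fun=> 0) (fun=> 0).
Proof. by split => //; exact: integrable0. Qed.

Lemma same_integralD E f1 g1 f2 g2 : measurable E ->
  same_integral E f1 g1 -> same_integral E f2 g2 ->
  same_integral E (f1 \+ f2) (g1 \+ g2).
Proof.
move=> mE [if1 ig1 e1] [if2 ig2 e2].
have integralD (h1 h2 : T -> R) :
    mu.-integrable E (EFin \o h1) -> mu.-integrable E (EFin \o h2) ->
    mu.-integrable E (EFin \o (h1 \+ h2)) /\
    (\int[mu]_(x in E) ((h1 \+ h2) x)%:E =
       \int[mu]_(x in E) (h1 x)%:E + \int[mu]_(x in E) (h2 x)%:E)%E.
  move=> ih1 ih2; have -> : EFin \o (h1 \+ h2) = (EFin \o h1) \+ (EFin \o h2).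
    by apply: funext => x /=; rewrite EFinD.
  split; first exact: integrableD.
  by rewrite -(integralD_EFin mE ih1 ih2); apply: eq_integral => x _; rewrite /= EFinD.
have [if12 ef] := integralD _ _ if1 if2; have [ig12 eg] := integralD _ _ ig1 ig2.
by split => //; rewrite ef eg e1 e2.
Qed.

Lemma same_integralZ E f g (c : R) : measurable E -> same_integral E f g ->
  same_integral E (fun x => c * f x) (fun x => c * g x).
Proof.
move=> mE [iff ig e].
have integralZ (h : T -> R) : mu.-integrable E (EFin \o h) ->
    mu.-integrable E (EFin \o (fun x => c * h x)) /\
    (\int[mu]_(x in E) (c * h x)%:E = c%:E * \int[mu]_(x in E) (h x)%:E)%E.
  move=> ih; have -> : EFin \o (fun x => c * h x) = (fun x => c%:E * (EFin \o h) x)%E.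
    by apply: funext => x /=; rewrite EFinM.
  split; first exact: integrableZl.
  by rewrite -(integralZl mE ih); apply: eq_integral => x _; rewrite /= EFinM.
have [icf ef] := integralZ _ iff; have [icg eg] := integralZ _ ig.
by split => //; rewrite ef eg e.
Qed.

Lemma same_integralB E f1 g1 f2 g2 : measurable E ->
  same_integral E f1 g1 -> same_integral E f2 g2 ->
  same_integral E (f1 \- f2) (g1 \- g2).
Proof.
move=> mE h1 h2.
by apply: same_integral_ext (same_integralD mE h1 (same_integralZ (-1) mE h2)) => x /=;
  rewrite mulN1r.
Qed.

Lemma same_integral_sum E (I : Type) (s : seq I) (f g : I -> T -> R) :
  measurable E -> (forall k, same_integral E (f k) (g k)) ->
  same_integral E (fun x => \sum_(k <- s) f k x) (fun x => \sum_(k <- s) g k x).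
Proof.
move=> mE fg; elim: s => [|k s ih].
  by apply: same_integral_ext (same_integral0 E) => x; rewrite big_nil.
by apply: same_integral_ext (same_integralD mE (fg k) ih) => x /=; rewrite big_cons.
Qed.

Lemma ae_forall_countable (I : countType) (P : I -> T -> Prop) :
  (forall i, {ae mu, forall x, P i x}) -> {ae mu, forall x, forall i, P i x}.
Proof.
move=> aeP.
have : {ae mu, forall x, forall n : nat,
    if unpickle n is Some i then P i x else True}.
  by apply: ae_foralln => n; case: (unpickle n) => [i|]; [exact: aeP | exact: aeW].
by apply: filterS => x Px i; have := Px (pickle i); rewrite pickleK.
Qed.

End integral_facts.

Lemma condexp_same_integral d (T : measurableType d) (R : realType)
    (mu : probability T R) (G : set (set T)) (X Y : T -> R) (E : set T) :
  G `<=` measurable -> is_condexp mu G X Y -> mu.-integrable setT (EFin \o X) ->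
  G E -> same_integral mu E Y X.
Proof.
move=> subG [_ [iY YX]] iX GE; have mE := subG _ GE.
by split; [exact: integrableS iY | exact: integrableS iX | exact: YX].
Qed.

Section real_facts.
Context (R : realType).

Lemma floor_mesh (eps t : R) : 0 < eps ->
  eps * (Num.floor (t / eps))%:~R <= t < eps * ((Num.floor (t / eps))%:~R + 1).
Proof.
move=> eps_gt0; have tE : t = eps * (t / eps) by rewrite mulrC divfK ?gt_eqF.
have := floorD1_gt (t / eps); rewrite intrD => ub.
rewrite {2 3}tE ler_pM2l // ltr_pM2l // ub andbT; exact: floor_le.
Qed.

Lemma norm_le_of_mesh (r t eps : R) : 0 <= t -> r <= t < r + eps -> `|r| <= t + eps.
Proof.
move=> t_ge0 /andP[rt tr]; case: (lerP 0 r) => r0.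
  by rewrite ger0_norm //; lra.
by rewrite ltr0_norm //; lra.
Qed.

Lemma ler0_of_le_invS (x M : R) : (forall j : nat, x <= j.+1%:R^-1 * M) -> x <= 0.
Proof.
move=> x_le; rewrite leNgt; apply/negP => x_gt0.
have N_gt0 : 0 < (Num.truncn (M / x)).+1%:R :> R by rewrite ltr0n.
have := x_le (Num.truncn (M / x)); apply/negP; rewrite -ltNge ltr_pdivrMl //.
by rewrite -ltr_pdivrMr // truncnS_gt.
Qed.

Lemma frozen_integrand_le0 (n : nat) (eps Dl Cp xl xu : R)
    (lam b a : 'I_n -> R) :
  0 < eps -> 0 < Dl -> 0 <= Cp -> xl <= xu ->
  (forall k, `|b k| <= Cp) -> (forall k, 0 <= a k) ->
  (forall k, `|lam k| <= Dl * a k + eps) ->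
  \sum_(k < n) a k * `|b k| <= 1 / Dl ->
  (xl - xu) + \sum_(k < n) lam k * (b k * xl - b k * xu)
    - eps * (n%:R * Cp) * `|xl - xu| <= 0.
Proof.
move=> eps_gt0 Dl_gt0 Cp_ge0 xlu b_le a_ge0 lam_le ab_le.
have sumE : \sum_(k < n) lam k * (b k * xl - b k * xu) =
    (\sum_(k < n) lam k * b k) * (xl - xu).
  by rewrite big_distrl; apply: eq_bigr => k _ /=; ring.
have Dl_ab : Dl * \sum_(k < n) a k * `|b k| <= 1.
  by apply: le_trans (ler_wpM2l (ltW Dl_gt0) ab_le) _; rewrite div1r mulfV ?gt_eqF.
have lam_b : 0 <= \sum_(k < n) (lam k * b k + (Dl * (a k * `|b k|) + eps * Cp)).
  apply: sumr_ge0 => k _.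
  have : `|lam k * b k| <= Dl * (a k * `|b k|) + eps * Cp.
    rewrite normrM; have := lam_le k; have := b_le k; have := a_ge0 k.
    have := normr_ge0 (b k); have := normr_ge0 (lam k); nra.
  have := ler_norm (- (lam k * b k)); rewrite normrN; lra.
rewrite !big_split /= -mulr_sumr sumr_const card_ord -mulr_natl in lam_b.
rewrite sumE ler0_norm ?subr_le0 //.
move: lam_b Dl_ab; set s := \sum_(k < n) lam k * b k; set t := Dl * _.
have : xl - xu <= 0 by rewrite subr_le0.
set z := xl - xu => z_le0 s_ge t_le.
have : 0 <= 1 + s + eps * (n%:R * Cp) by lra.
nra.
Qed.

Lemma ler_of_active_recursions (s : \bar R) (yl yu cl cu gl gu Dl a0 r : R) :
  0 < Dl -> Dl * a0 < 1 ->
  (maxe s (cu + gu * Dl)%:E <= yu%:E)%E -> (yl%:E <= maxe s (cl + gl * Dl)%:E)%E ->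
  gl - gu <= a0 * `|yl - yu| + r -> cl - cu + Dl * r <= 0 -> yl <= yu.
Proof.
move=> Dl_gt0 Dl_a0 up low lip gap; rewrite leNgt; apply/negP => yul.
move: up; rewrite ge_max => /andP[s_yu]; rewrite lee_fin => cu_yu.
have yl_cl : yl <= cl + gl * Dl.
  move: low; rewrite le_max => /orP[yl_s|]; last by rewrite lee_fin.
  by have := le_trans yl_s s_yu; rewrite lee_fin leNgt yul.
rewrite gtr0_norm ?subr_gt0 // in lip.
nra.
Qed.

End real_facts.

Section condexp_comparison.
Context d (T : measurableType d) (R : realType) (mu : probability T R).
Context (G : set (set T)) (sG : sigma_algebra setT G) (subG : G `<=` measurable).
Context (CE : (T -> R) -> T -> R).
Hypothesis CE_condexp :
  forall X, mu.-integrable setT (EFin \o X) -> is_condexp mu G X (CE X).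
Context (Dn : nat) (A : set T) (GA : G A) (Xl Xu : T -> R).
Hypotheses (iXl : mu.-integrable setT (EFin \o Xl))
  (iXu : mu.-integrable setT (EFin \o Xu)).
Hypothesis Xl_le_Xu : {ae mu, forall x, A x -> Xl x <= Xu x}.
Context (b : 'I_Dn -> T -> R) (C : R).
Hypotheses (mb : forall k, measurable_fun setT (b k)) (b_le : forall k x, `|b k x| <= C).
Context (a : 'I_Dn -> T -> R) (Dl : R).
Hypotheses (a_wrt : forall k, measurable_wrt G (a k)) (a_ge0 : forall k x, 0 <= a k x).
Hypothesis Dl_gt0 : 0 < Dl.
Hypothesis ab_le : {ae mu, forall x, \sum_(k < Dn) a k x * `|b k x| <= 1 / Dl}.

Let Cp := `|C|.
Let K := Dn%:R * Cp.
Let W k x := CE (fun y => b k y * Xl y) x - CE (fun y => b k y * Xu y) x.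
Let Q := CE (fun y => `|Xl y - Xu y|).
Let gap x := CE Xl x - CE Xu x + Dl * \sum_(k < Dn) a k x * `|W k x|.

Let integrable_bX (X : T -> R) k : mu.-integrable setT (EFin \o X) ->
  mu.-integrable setT (EFin \o (fun y => b k y * X y)).
Proof.
move=> iX.
have b_bounded : [bounded b k x | x in [set: T]].
  exists Cp; split; first exact: num_real.
  move=> M CM x _; apply: le_trans (b_le k x) _; apply: ltW.
  by apply: le_lt_trans CM; exact: ler_norm.
apply: eq_integrable (integrableMl measurableT iX (mb k) b_bounded) => // x _ /=.
by rewrite -EFinM mulrC.
Qed.

Let integrable_dX : mu.-integrable setT (EFin \o (fun y => `|Xl y - Xu y|)).
Proof.
by have := integrable_abse (integrableB measurableT iXl iXu); apply: eq_integrable.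
Qed.

Let measurable_CE X : mu.-integrable setT (EFin \o X) ->
  measurable_fun [set: g_sigma_algebraType G] (CE X).
Proof. by move=> iX; have [CE_wrt _] := CE_condexp iX; exact: measurable_wrt_fun. Qed.

Let measurable_W k : measurable_fun [set: g_sigma_algebraType G] (W k).
Proof. by apply: measurable_funB; apply: measurable_CE; exact: integrable_bX. Qed.

Section cells.
Variable eps : R.
Hypothesis eps_gt0 : 0 < eps.

(* A cell freezes Dl * a k in [eps * v k, eps * (v k + 1)) and the sign of W k. *)
Definition cell := {ffun 'I_Dn -> int * bool}.
Let v (c : cell) k : R := (c k).1%:~R.
Let sgn (c : cell) k : R := if (c k).2 then 1 else -1.
Let lam c k := eps * v c k * sgn c k.
Let frozen_gap c x := CE Xl x - CE Xu x + \sum_(k < Dn) lam c k * W k x.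
Let in_cell c := A `&` \bigcap_(k in setT)
  ([set x | eps * v c k <= Dl * a k x] `&` [set x | Dl * a k x < eps * (v c k + 1)]
   `&` [set x | 0 <= sgn c k * W k x]).

Let in_cell_sigma c : G (in_cell c).
Proof.
have mcst (r : R) : measurable_fun [set: g_sigma_algebraType G] (fun=> r).
  exact: measurable_cst.
have mDa k : measurable_fun [set: g_sigma_algebraType G] (fun x => Dl * a k x).
  by apply: measurable_funM; [exact: mcst | exact: measurable_wrt_fun].
apply/(sigma_setE sG); apply: measurableI; first exact/(sigma_setE sG).
apply: fin_bigcap_measurable; first exact: finite_finset.
move=> k _; apply: measurableI; first apply: measurableI; apply/(sigma_setE sG).
- exact: sigma_set_ler.
- exact: sigma_set_ltr.
- by apply: sigma_set_ler => //; apply: measurable_funM; [exact: mcst | exact: measurable_W].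
Qed.

Let measurable_frozen_gap c :
  measurable_fun [set: g_sigma_algebraType G] (frozen_gap c).
Proof.
apply: measurable_funD; first by apply: measurable_funB; apply: measurable_CE.
apply: measurable_sum => k.
by apply: measurable_funM; [exact: measurable_cst | exact: measurable_W].
Qed.

Let frozen_gap_le c : {ae mu, forall x, in_cell c x -> frozen_gap c x <= eps * K * Q x}.
Proof.
set E := in_cell c `&` [set x | eps * K * Q x < frozen_gap c x].
have GE : G E.
  apply/(sigma_setE sG); apply: measurableI; first exact/(sigma_setE sG)/in_cell_sigma.
  apply/(sigma_setE sG); apply: sigma_set_ltr (measurable_frozen_gap c) => //.
  by apply: measurable_funM; [exact: measurable_cst | exact: measurable_CE].
have mE := subG GE.
have CE_E (X : T -> R) (iX : mu.-integrable setT (EFin \o X)) :=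
  condexp_same_integral subG (CE_condexp iX) iX GE.
have := same_integralB mE (same_integralD mE (same_integralB mE (CE_E _ iXl) (CE_E _ iXu))
  (same_integral_sum (index_enum 'I_Dn) mE (fun k => same_integralZ (lam c k) mE
    (same_integralB mE (CE_E _ (integrable_bX k iXl)) (CE_E _ (integrable_bX k iXu))))))
  (same_integralZ (eps * K) mE (CE_E _ integrable_dX)).
pose u x := frozen_gap c x - eps * K * Q x.
pose h x := (Xl x - Xu x) + \sum_(k < Dn) lam c k * (b k x * Xl x - b k x * Xu x)
  - eps * K * `|Xl x - Xu x|.
move=> /(same_integral_ext (f' := u) (g' := h) (fun=> erefl) (fun=> erefl)) [iu ih uh].
have h_le0 : (\int[mu]_(x in E) (h x)%:E <= 0)%E.
  have [i0 _ _] := same_integral0 mu E.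
  apply: le_trans (ae_le_integral mE ih i0 _) _; last by rewrite integral0.
  apply: filterS2 Xl_le_Xu ab_le => x Xlu ab [[Ax cx] _].
  apply: (@frozen_integrand_le0 _ _ eps Dl Cp (Xl x) (Xu x) (lam c)
    (fun k => b k x) (fun k => a k x)) => //.
  - exact: normr_ge0.
  - exact: Xlu.
  - by move=> k; apply: le_trans (b_le k x) _; exact: ler_norm.
  - move=> k; have [[lo hi] _] := cx k I; rewrite mulrDr mulr1 in hi.
    have Da_ge0 : 0 <= Dl * a k x by apply: mulr_ge0; [exact: ltW | exact: a_ge0].
    rewrite /lam normrM /sgn; case: (c k).2; rewrite ?normrN normr1 mulr1;
      by apply: norm_le_of_mesh; rewrite // lo hi.
have mu_ : measurable_fun E u.
  by apply/measurable_EFinP; exact: measurable_int iu.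
have u_le0 : (\int[mu]_(x in E) (u x)%:E <= 0)%E by rewrite uh.
have notE : {ae mu, forall x, ~ E x}.
  apply: ae_notin_of_gt0_integral_le0 mE mu_ _ u_le0.
  by move=> x [_ /= lt]; rewrite /u subr_gt0.
apply: filterS notE => x notEx cx; rewrite leNgt; apply/negP => lt; exact: notEx.
Qed.

Lemma gap_le_eps :
  {ae mu, forall x, A x -> gap x <= eps * (K * Q x + \sum_(k < Dn) `|W k x|)}.
Proof.
apply: filterS (ae_forall_countable frozen_gap_le) => x frozen_le Ax.
pose c : cell := [ffun k => (Num.floor (Dl * a k x / eps), 0 <= W k x)].
have mesh k := floor_mesh (Dl * a k x) eps_gt0.
have cx : in_cell c x.
  split => // k _; rewrite /v /sgn ffunE /=.
  have /andP[lo hi] := mesh k.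
  split; first by split.
  case: ifP => [W_ge0|/negbT]; first by rewrite mul1r.
  by rewrite -ltNge mulN1r oppr_ge0 => /ltW.
have gap_frozen : Dl * \sum_(k < Dn) a k x * `|W k x| <=
    \sum_(k < Dn) lam c k * W k x + eps * \sum_(k < Dn) `|W k x|.
  rewrite !mulr_sumr -big_split /=; apply: ler_sum => k _.
  rewrite /lam /v /sgn ffunE /=.
  have /andP[lo hi] := mesh k; have a_ge0x := a_ge0 k x.
  set z := (Num.floor _)%:~R in lo hi *.
  case: ifP => [W_ge0|/negbT]; first by rewrite ger0_norm // mulr1; have := normr_ge0 (W k x); nra.
  by rewrite -ltNge => W_lt0; rewrite ltr0_norm //; nra.
have := frozen_le c cx; rewrite /gap /frozen_gap /K; lra.
Qed.

End cells.

Lemma gap_le0 : {ae mu, forall x, A x -> gap x <= 0}.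
Proof.
have inv_gt0 (j : nat) : 0 < j.+1%:R^-1 :> R by rewrite invr_gt0 ltr0n.
apply: filterS (ae_foralln (fun j => gap_le_eps (inv_gt0 j))) => x gap_le Ax.
apply: (@ler0_of_le_invS _ _ (K * Q x + \sum_(k < Dn) `|W k x|)) => j.
exact: gap_le j Ax.
Qed.

Lemma comparison_step (yl yu a0 : T -> R) (g : R -> ('I_Dn -> R) -> T -> R)
    (S : T -> \bar R) :
  {ae mu, forall x, a0 x < 1 / Dl} ->
  (forall x y y' (z z' : 'I_Dn -> R), `|g y z x - g y' z' x| <=
     a0 x * `|y - y'| + \sum_(k < Dn) a k x * `|z k - z' k|) ->
  {ae mu, forall x, A x -> (maxe (S x) (CE Xu x + g (yu x)
     (fun k => CE (fun y => b k y * Xu y) x) x * Dl)%:E <= (yu x)%:E)%E} ->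
  {ae mu, forall x, A x -> ((yl x)%:E <= maxe (S x) (CE Xl x + g (yl x)
     (fun k => CE (fun y => b k y * Xl y) x) x * Dl)%:E)%E} ->
  {ae mu, forall x, A x -> yl x <= yu x}.
Proof.
move=> a0_lt g_lip up low.
apply: filterS3 a0_lt up (filterI low gap_le0) => x a0x upx [lowx gapx] Ax.
apply: (ler_of_active_recursions (a0 := a0 x) Dl_gt0 _ (upx Ax) (lowx Ax) _ (gapx Ax)).
  by rewrite -ltr_pdivlMl // mulr1 -div1r.
exact: le_trans (ler_norm _) (g_lip _ _ _ _ _).
Qed.

End condexp_comparison.

Lemma leq_downward_ind (P : nat -> Prop) (n : nat) :
  P n -> (forall i, (i < n)%N -> P i.+1 -> P i) -> forall i, (i <= n)%N -> P i.
Proof.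
move=> Pn PS i lein; rewrite -(subKn lein).
elim: (n - i)%N (leq_subr i n) => [|k IH] kn; first by rewrite subn0.
apply: PS; first by rewrite ltn_subrL ltn0Sn (leq_trans (ltn0Sn k) kn).
by rewrite subnSK //; apply: IH; exact: ltnW.
Qed.

Unset Implicit Arguments. Set Strict Implicit. Set Printing Implicit Defensive.

Theorem proposition2p2
  (d : measure_display) (T : measurableType d) (R : realType)
  (mu : probability T R) (n D : nat)
  (F : nat -> set (set T))
  (CE : nat -> (T -> R) -> T -> R)
  (Delta : nat -> R)
  (S : nat -> T -> \bar R)
  (f : nat -> R -> ('I_D -> R) -> T -> R)
  (alpha0 : nat -> T -> R) (alpha : 'I_D -> nat -> T -> R)
  (beta : nat -> 'I_D -> T -> R)
  (sigma tau : T -> nat)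
  (Yup Ylow : nat -> T -> R) :
  (1 <= n)%N -> (1 <= D)%N ->
  filtration n F ->
  (* CE i X is a version of E_i[X] = E[X | F_i] for every integrable X *)
  (forall i (X : T -> R), (i <= n)%N -> mu.-integrable setT (EFin \o X) ->
     is_condexp mu (F i) X (CE i X)) ->
  (forall i, (i < n)%N -> 0 < Delta i) ->
  (forall i, (i <= n)%N -> emeasurable_wrt (F i) (S i)) ->
  (forall i x, S i x != +oo%E) ->
  (forall x, S n x \is a fin_num) ->
  (forall i, (i < n)%N ->
     mu.-integrable setT (fun x => if S i x == -oo%E then 0%E else S i x)) ->
  mu.-integrable setT (S n) ->
  (forall i y z, (i < n)%N -> measurable_wrt (F i) (f i y z)) ->
  (forall i, (i < n)%N -> mu.-integrable setT (EFin \o f i 0 (fun _ => 0))) ->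
  (forall i, (i < n)%N -> measurable_wrt (F i) (alpha0 i) /\ (forall x, 0 <= alpha0 i x)) ->
  (forall k i, (i < n)%N -> measurable_wrt (F i) (alpha k i) /\ (forall x, 0 <= alpha k i x)) ->
  (forall i x y y' (z z' : 'I_D -> R), (i < n)%N ->
     `|f i y z x - f i y' z' x| <=
       alpha0 i x * `|y - y'| + \sum_(k < D) alpha k i x * `|z k - z' k|) ->
  (* the bounded adapted process beta = (beta_i)_{i=1..n} *)
  (forall i k, (1 <= i <= n)%N -> measurable_wrt (F i) (beta i k)) ->
  (exists C : R, forall i k x, (1 <= i <= n)%N -> `|beta i k x| <= C) ->
  (forall i, (i < n)%N ->
     {ae mu, forall x, alpha0 i x < 1 / Delta i /\
        \sum_(k < D) alpha k i x * `|beta i.+1 k x| <= 1 / Delta i}) ->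
  stopping_time n F sigma -> stopping_time n F tau ->
  (forall x, (sigma x <= tau x)%N) ->
  (forall i, (i <= n)%N -> measurable_wrt (F i) (Yup i) /\
     mu.-integrable setT (EFin \o Yup i)) ->
  (forall i, (i <= n)%N -> measurable_wrt (F i) (Ylow i) /\
     mu.-integrable setT (EFin \o Ylow i)) ->
  (forall i, {ae mu, forall x, (sigma x <= i < tau x)%N ->
     (maxe (S i x)
        (CE i (Yup i.+1) x +
         f i (Yup i x) (fun k => CE i (fun y => beta i.+1 k y * Yup i.+1 y) x) x
           * Delta i)%:E <= (Yup i x)%:E)%E}) ->
  (forall i, {ae mu, forall x, (sigma x <= i < tau x)%N ->
     ((Ylow i x)%:E <= maxe (S i x)
        (CE i (Ylow i.+1) x +
         f i (Ylow i x) (fun k => CE i (fun y => beta i.+1 k y * Ylow i.+1 y) x) x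
           * Delta i)%:E)%E}) ->
  {ae mu, forall x, Ylow (tau x) x <= Yup (tau x) x} ->
  forall i, (i <= n)%N ->
    {ae mu, forall x, (sigma x <= i <= tau x)%N -> Ylow i x <= Yup i x}.
Proof.
move=> _ _ [F_sigma _] CE_condexp Delta_gt0 _ _ _ _ _ _ _ _ alpha_wrt f_lip beta_wrt
  [C beta_le] alpha_beta_le sigma_stop tau_stop _ Yup_adapted Ylow_adapted
  Yup_super Ylow_sub Y_tau.
have ae_le_of_window i :
    {ae mu, forall x, (sigma x <= i < tau x)%N -> Ylow i x <= Yup i x} ->
    {ae mu, forall x, (sigma x <= i <= tau x)%N -> Ylow i x <= Yup i x}.
  apply: filterS2 Y_tau => x Y_taux Yx /andP[si]; rewrite leq_eqVlt => /orP[/eqP->//|ti].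
  by apply: Yx; rewrite si ti.
apply: leq_downward_ind.
  apply/ae_le_of_window/aeW => x /andP[_]; rewrite ltnNge.
  by have [-> _] := tau_stop.
move=> i lt_in Y_next; apply: ae_le_of_window.
have [sG subG] := F_sigma i (ltnW lt_in); have [_ subG1] := F_sigma i.+1 lt_in.
have beta_i1 : (1 <= i.+1 <= n)%N by [].
apply: (comparison_step sG subG (CE_condexp i ^~ (ltnW lt_in))
    (stopping_window_sigma sG (ltnW lt_in) sigma_stop tau_stop)
    (Ylow_adapted _ lt_in).2 (Yup_adapted _ lt_in).2 _
    (fun k => measurable_wrt_measurable subG1 (beta_wrt _ k beta_i1))
    (fun k x => beta_le _ k x beta_i1) (fun k => (alpha_wrt k i lt_in).1)
    (fun k => (alpha_wrt k i lt_in).2) (Delta_gt0 i lt_in) _ _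
    (fun x y y' z z' => f_lip i x y y' z z' lt_in) (Yup_super i) (Ylow_sub i)).
- apply: filterS Y_next => x Yx /andP[si it]; apply: Yx.
  by rewrite it andbT; exact: leqW.
- by apply: filterS (alpha_beta_le i lt_in) => x [].
- by apply: filterS (alpha_beta_le i lt_in) => x [].
Qed.
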